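(* Let $n\ge3$, $\ell>0$, $\alpha\ge(n-2)\ell$, $S=\alpha I_n+\ell\mathbf{1}_n\mathbf{1}_n^\top$, and let $P\ne0$ be a real symmetric diagonally dominant $n\times n$ matrix with nonnegative entries. Define $f(t)=\|(S+tP)^{-1}\|_\infty$ for $t\ge0$. Then $f$ is differentiable at $t=0$ (as a one-sided derivative) and $f'(0)<0$.
   Context: For a real matrix $P$, $\Delta_i(P)=|P_{ii}|-\sum_{j\ne i}|P_{ij}|$; $P$ is diagonally dominant if $\Delta_i(P)\ge0$ for all $i$. $\|A\|_\infty$ is the maximum absolute row sum. *)

From HB Require Import structures.
From mathcomp Require Import all_boot all_order all_algebra.
Set Implicit Arguments. Unset Strict Implicit. Unset Printing Implicit Defensive.
Import Order.TTheory GRing.Theory Num.Theory.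
Local Open Scope ring_scope.

Definition Delta (R : numDomainType) (n : nat) (P : 'M[R]_n) (i : 'I_n) : R :=
  `|P i i| - \sum_(j < n | j != i) `|P i j|.

Definition diag_dominant (R : numDomainType) (n : nat) (P : 'M[R]_n) : Prop :=
  forall i : 'I_n, 0 <= Delta P i.

(* maximum absolute row sum (row sums are >= 0, so 0 is a neutral start) *)
Definition norm_inf (R : realDomainType) (m n : nat) (A : 'M[R]_(m, n)) : R :=
  \big[Num.max/0]_(i < m) \sum_(j < n) `|A i j|.

Definition ones (R : pzRingType) (n : nat) : 'cV[R]_n := const_mx 1.

Definition has_right_deriv0 (R : realFieldType) (f : R -> R) (L : R) : Prop :=
  forall eps : R, 0 < eps -> exists2 delta : R, 0 < delta &
    forall t : R, 0 < t -> t < delta -> `|(f t - f 0) / t - L| < eps.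

From HB Require Import structures.
From mathcomp Require Import all_boot all_order all_algebra.
From mathcomp Require Import ring lra.
Import Order.TTheory GRing.Theory Num.Theory.
Local Open Scope ring_scope.

(* The inverse of [S = alpha I + l J] ([J] the all-ones matrix) is
   [B = c I - d J] with [c = 1/alpha] and [d = l / (alpha (alpha + n l))];
   its diagonal is positive and its off-diagonal entries are negative.
   Perturbing, [(S + tP)^-1 = B - t BPB + O(t^2)] (resolvent identity), so for
   small [t] every row of [(S + tP)^-1] keeps the sign pattern of [B], and its
   absolute row sum is the linear quantity [2 Y_ii - sum_j Y_ij].  Hence each
   row sum equals [r0 - t margin(BPB, i) + O(t^2)] with the same [r0] for all
   rows, the maximum has right derivative [- min_i margin(BPB, i)] at [0], and
   it remains to show [margin(BPB, i) > 0].  Expanding [BPB] for symmetric [P]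
   reduces this to a scalar inequality in [P_ii], the off-diagonal row sum and
   the grand sum of [P], which diagonal dominance and [P <> 0] settle. *)

Set Implicit Arguments. Unset Strict Implicit. Unset Printing Implicit Defensive.

Lemma ler_sum_term (R : numDomainType) (I : finType) (P : pred I) (F : I -> R) i :
  (forall j, P j -> 0 <= F j) -> P i -> F i <= \sum_(j | P j) F j.
Proof. by move=> F_ge0 Pi; rewrite (bigD1 i) //= lerDl sumr_ge0 // => j /andP[/F_ge0]. Qed.

(* The entrywise l1-norm [mx_l1 M = sum_ij |M_ij|]: a submultiplicative norm
   dominating every entry and every absolute row sum, used to control the
   remainder terms of the expansion of [(S + tP)^-1]. *)
Section EntrywiseNorm.
Variable R : numDomainType.

Definition mx_l1 m k (M : 'M[R]_(m, k)) : R := \sum_i \sum_j `|M i j|.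

Lemma mx_l1_ge0 m k (M : 'M[R]_(m, k)) : 0 <= mx_l1 M.
Proof. by apply: sumr_ge0 => i _; apply: sumr_ge0. Qed.

Lemma row_le_mx_l1 m k (M : 'M[R]_(m, k)) i : \sum_j `|M i j| <= mx_l1 M.
Proof. by apply: (ler_sum_term (P := predT)) => // j _; apply: sumr_ge0. Qed.

Lemma entry_le_mx_l1 m k (M : 'M[R]_(m, k)) i j : `|M i j| <= mx_l1 M.
Proof.
apply: le_trans (row_le_mx_l1 M i).
exact: (ler_sum_term (P := predT) (F := fun j => `|M i j|)).
Qed.

Lemma mx_l1D m k (A B : 'M[R]_(m, k)) : mx_l1 (A + B) <= mx_l1 A + mx_l1 B.
Proof.
rewrite /mx_l1 -big_split /=; apply: ler_sum => i _.
by rewrite -big_split /=; apply: ler_sum => j _; rewrite mxE ler_normD.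
Qed.

Lemma mx_l1Z m k a (A : 'M[R]_(m, k)) : mx_l1 (a *: A) = `|a| * mx_l1 A.
Proof.
rewrite /mx_l1 mulr_sumr; apply: eq_bigr => i _; rewrite mulr_sumr.
by apply: eq_bigr => j _; rewrite mxE normrM.
Qed.

Lemma mx_l1M m k p (A : 'M[R]_(m, k)) (B : 'M[R]_(k, p)) :
  mx_l1 (A *m B) <= mx_l1 A * mx_l1 B.
Proof.
rewrite /mx_l1 mulr_suml; apply: ler_sum => i _.
apply: (@le_trans _ _ (\sum_j \sum_l `|A i l| * `|B l j|)).
  apply: ler_sum => j _; rewrite mxE; apply: le_trans (ler_norm_sum _ _ _) _.
  by apply: ler_sum => l _; rewrite normrM.
rewrite exchange_big /= mulr_suml; apply: ler_sum => l _.
by rewrite -mulr_sumr ler_wpM2l // row_le_mx_l1.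
Qed.

Lemma mx_l1_eq0 m k (A : 'M[R]_(m, k)) : mx_l1 A <= 0 -> A = 0.
Proof.
move=> A_le0; apply/matrixP => i j; rewrite mxE; apply/eqP; rewrite -normr_le0.
exact: le_trans (entry_le_mx_l1 A i j) A_le0.
Qed.

End EntrywiseNorm.

Lemma absorb_half (R : realFieldType) (x a tg : R) :
  0 <= x -> 0 <= tg -> tg <= 1/2 -> x <= a + x * tg -> x <= 2 * a.
Proof. by move=> x0 tg0 tg_le x_le; have := ler_wpM2l x0 tg_le; lra. Qed.

Section InversePerturbation.
Variables (R : realFieldType) (n : nat) (S B P : 'M[R]_n).
Hypothesis SB : S *m B = 1%:M.

Local Notation G := (P *m B).
Local Notation Y t := (invmx (S + t *: P)).

(* [S + tP] stays invertible: a kernel vector [u] satisfies [u = - t u G]. *)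
Lemma perturbed_unitmx t :
  0 <= t -> t * mx_l1 G <= 1/2 -> S + t *: P \in unitmx.
Proof.
move=> t0 small; rewrite -row_free_unit; apply: inj_row_free => u uX0.
have u_fix : u = - (t *: (u *m G)).
  have uS : u *m S = - (t *: (u *m P)).
    by apply/eqP; rewrite -addr_eq0 scalemxAr -mulmxDr; apply/eqP.
  by rewrite -[LHS]mulmx1 -SB mulmxA uS mulNmx -scalemxAl mulmxA.
apply: mx_l1_eq0; rewrite -(mulr0 2).
apply: (absorb_half (mx_l1_ge0 u) _ small); first by rewrite mulr_ge0 // mx_l1_ge0.
rewrite add0r {1}u_fix -scaleN1r !mx_l1Z normrN1 mul1r ger0_norm // mulrCA.
by rewrite ler_wpM2l // mx_l1M.
Qed.

Lemma perturbed_inv_fix t : S + t *: P \in unitmx -> Y t = B - t *: (Y t *m G).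
Proof.
move=> X_unit; have YS : Y t *m S = 1%:M - t *: (Y t *m P).
  by rewrite -(mulVmx X_unit) mulmxDr -scalemxAr addrK.
by rewrite -[LHS]mulmx1 -SB mulmxA YS mulmxBl mul1mx -scalemxAl mulmxA.
Qed.

Lemma perturbed_inv_bound t :
  0 <= t -> t * mx_l1 G <= 1/2 -> mx_l1 (Y t) <= 2 * mx_l1 B.
Proof.
move=> t0 small; apply: (absorb_half (mx_l1_ge0 _) _ small).
  by rewrite mulr_ge0 // mx_l1_ge0.
rewrite {1}(perturbed_inv_fix (perturbed_unitmx t0 small)).
apply: le_trans (mx_l1D _ _) _; rewrite -scaleN1r !mx_l1Z normrN1 mul1r.
by rewrite ger0_norm // lerD2l mulrCA ler_wpM2l // mx_l1M.
Qed.

Lemma perturbed_inv_second_order t :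
  0 <= t -> t * mx_l1 G <= 1/2 ->
  mx_l1 (Y t - (B - t *: (B *m P *m B))) <= t ^+ 2 * (2 * mx_l1 B * mx_l1 (G *m G)).
Proof.
move=> t0 small; have fix_t := perturbed_inv_fix (perturbed_unitmx t0 small).
have -> : Y t - (B - t *: (B *m P *m B)) = t ^+ 2 *: (Y t *m (G *m G)).
  rewrite {1}fix_t {1}fix_t mulmxBl -scalemxAl -!mulmxA scalerBr scalerA -expr2.
  by apply/matrixP => i j; rewrite !mxE; ring.
rewrite mx_l1Z ger0_norm ?exprn_ge0 // ler_wpM2l ?exprn_ge0 //.
apply: le_trans (mx_l1M _ _) _; apply: ler_wpM2r; first exact: mx_l1_ge0.
exact: perturbed_inv_bound.
Qed.

End InversePerturbation.

Lemma sum_abs_sign_pattern (R : realDomainType) n (v : 'I_n -> R) i :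
  0 <= v i -> (forall j, j != i -> v j <= 0) ->
  \sum_j `|v j| = 2 * v i - \sum_j v j.
Proof.
move=> vi_ge0 vj_le0; rewrite (bigD1 i) //= [X in _ = _ - X](bigD1 i) //=.
have -> : \sum_(j | j != i) `|v j| = - \sum_(j | j != i) v j.
  by rewrite -sumrN; apply: eq_bigr => j ji; rewrite ler0_norm ?vj_le0.
rewrite ger0_norm //; ring.
Qed.

(* A perturbation [w] smaller than the sign margin [mu] of [b] keeps the sign
   pattern, so the l1-norm of [b + w] stays linear in [w]. *)
Lemma sum_abs_perturbed (R : realDomainType) n (b w : 'I_n -> R) i mu :
  mu <= b i -> (forall j, j != i -> b j <= - mu) -> (forall j, `|w j| <= mu) ->
  \sum_j `|b j + w j| = (2 * b i - \sum_j b j) + (2 * w i - \sum_j w j).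
Proof.
move=> bi bj w_small.
rewrite (sum_abs_sign_pattern (v := fun j => b j + w j) (i := i)).
- by rewrite big_split /=; ring.
- by have := w_small i; rewrite ler_norml; lra.
- by move=> j ji; have := bj j ji; have := w_small j; rewrite ler_norml; lra.
Qed.

Lemma right_deriv0_of_quadratic_error (R : realFieldType) (f : R -> R) L K delta0 :
  0 < delta0 ->
  (forall t, 0 < t -> t < delta0 -> `|f t - (f 0 + t * L)| <= K * t ^+ 2) ->
  has_right_deriv0 f L.
Proof.
move=> delta0_gt0 err eps eps_gt0.
have K1_gt0 : 0 < `|K| + 1 by rewrite ltr_wpDl.
exists (Num.min delta0 (eps / (`|K| + 1))); first by rewrite lt_min delta0_gt0 divr_gt0.
move=> t t_gt0; rewrite lt_min => /andP[t_delta0 t_eps].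
have -> : (f t - f 0) / t - L = (f t - (f 0 + t * L)) / t by field; rewrite gt_eqF.
rewrite normrM [`|t^-1|]gtr0_norm ?invr_gt0 // ltr_pdivrMr //.
apply: le_lt_trans (err t t_gt0 t_delta0) _.
rewrite expr2 mulrA ltr_pM2r // (le_lt_trans (ler_wpM2r (ltW t_gt0) (ler_norm K))) //.
rewrite ltr_pdivlMr // in t_eps; apply: le_lt_trans _ t_eps.
by rewrite mulrC ler_pM2l // lerDl.
Qed.

Lemma bigmax_approx (R : realDomainType) (I : finType) (r q : I -> R) a t e im :
  0 <= t -> (forall i, q im <= q i) -> (forall i, 0 <= r i) ->
  (forall i, `|r i - (a - t * q i)| <= e) ->
  `|\big[Num.max/0]_i r i - (a - t * q im)| <= e.
Proof.
move=> t_ge0 q_min r_ge0 r_approx; rewrite ler_norml; apply/andP; split.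
  have /andP[lo _] : - e <= r im - (a - t * q im) <= e by rewrite -ler_norml.
  by have := le_bigmax 0 r im; lra.
have r_le i : r i <= a - t * q i + e by have := r_approx i; rewrite ler_norml => /andP[]; lra.
rewrite lerBlDr; apply: bigmax_le => [|i _]; first by have := r_le im; have := r_ge0 im; lra.
by have := ler_wpM2l t_ge0 (q_min i); have := r_le i; lra.
Qed.

Lemma small_times (R : realFieldType) (x y : R) :
  0 < y -> exists2 delta, 0 < delta & forall t, 0 <= t -> t < delta -> t * x < y.
Proof.
move=> y_gt0; have x1_gt0 : 0 < `|x| + 1 by rewrite ltr_wpDl.
exists (y / (`|x| + 1)) => [|t t_ge0]; first by rewrite divr_gt0.
rewrite ltr_pdivlMr // => t_lt; apply: le_lt_trans _ t_lt.
by apply: le_trans (ler_wpM2l t_ge0 (ler_norm x)) _; rewrite ler_wpM2l // lerDl.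
Qed.

(* [margin M i = 2 M_ii - sum_j M_ij]; by [sum_abs_sign_pattern] it is the
   absolute row sum of a row with the sign pattern of [S^-1] below. *)
Definition margin (R : pzRingType) n (M : 'M[R]_n) (i : 'I_n) : R :=
  2 * M i i - \sum_j M i j.

Lemma margin_abs_le (R : numDomainType) n (M : 'M[R]_n) i :
  `|margin M i| <= 3 * mx_l1 M.
Proof.
have -> : 3 = 2 + 1 :> R by ring.
apply: le_trans (ler_normB _ _) _; rewrite normrM ger0_norm // [leRHS]mulrDl mul1r.
apply: lerD; first by rewrite ler_wpM2l // entry_le_mx_l1.
exact: le_trans (ler_norm_sum _ _ _) (row_le_mx_l1 _ _).
Qed.

Section InverseNormDerivative.
Variables (R : realFieldType) (n : nat) (S B P : 'M[R]_n) (mu r0 : R).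
Hypothesis SB : S *m B = 1%:M.
Hypothesis mu_gt0 : 0 < mu.
Hypothesis B_diag : forall i, mu <= B i i.
Hypothesis B_offdiag : forall i j, j != i -> B i j <= - mu.
Hypothesis B_margin : forall i, margin B i = r0.

Local Notation Y t := (invmx (S + t *: P)).
Local Notation D := (B *m P *m B).

Lemma inv_row_sums_approx :
  exists2 delta, 0 < delta & exists K, forall t, 0 <= t -> t < delta ->
    forall i, `|\sum_j `|Y t i j| - (r0 - t * margin D i)| <= K * t ^+ 2.
Proof.
pose K2 := 2 * mx_l1 B * mx_l1 ((P *m B) *m (P *m B)).
have K2_ge0 : 0 <= K2 by rewrite !mulr_ge0 // mx_l1_ge0.
have half_gt0 : 0 < 1 / 2 :> R by rewrite divr_gt0.
have [d1 d1_gt0 small_G] := small_times (mx_l1 (P *m B)) half_gt0.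
have [d2 d2_gt0 small_D] := small_times (mx_l1 D + K2) mu_gt0.
have [d3 d3_gt0 small_1] := small_times 1 (@ltr01 R).
exists (Num.min d1 (Num.min d2 d3)); first by rewrite !lt_min d1_gt0 d2_gt0 d3_gt0.
exists (3 * K2) => t t_ge0; rewrite !lt_min => /andP[t_d1 /andP[t_d2 t_d3]] i.
have tG := ltW (small_G t t_ge0 t_d1); have tD := small_D t t_ge0 t_d2.
have t_le1 : t <= 1 by have := small_1 t t_ge0 t_d3; rewrite mulr1 => /ltW.
set E := Y t - (B - t *: D).
have E_le : mx_l1 E <= t ^+ 2 * K2 := perturbed_inv_second_order SB t_ge0 tG.
have Y_row j : Y t i j = B i j + (E i j - t * D i j) by rewrite /E !mxE; ring.
have w_small j : `|E i j - t * D i j| <= mu.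
  apply: le_trans (ler_normB _ _) _; rewrite normrM ger0_norm //.
  have := ler_wpM2l t_ge0 (entry_le_mx_l1 D i j).
  have := ler_wpM2r K2_ge0 (ler_wpM2l t_ge0 t_le1); rewrite mulr1 -expr2.
  by have := entry_le_mx_l1 E i j; lra.
rewrite (eq_bigr _ (fun j _ => congr1 Num.norm (Y_row j))).
rewrite (sum_abs_perturbed (@B_diag i) (@B_offdiag i) w_small) -/(margin B i) B_margin.
have -> : 2 * (E i i - t * D i i) - \sum_j (E i j - t * D i j) = margin E i - t * margin D i.
  by rewrite /margin sumrB -mulr_sumr; ring.
have -> : r0 + (margin E i - t * margin D i) - (r0 - t * margin D i) = margin E i by ring.
apply: le_trans (margin_abs_le E i) _; rewrite -mulrA [_ * t ^+ 2]mulrC.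
by rewrite ler_wpM2l.
Qed.

Lemma inv_norm_right_deriv im :
  (forall i, margin D im <= margin D i) ->
  has_right_deriv0 (fun t => norm_inf (Y t)) (- margin D im).
Proof.
move=> D_min; have [delta delta_gt0 [K rows]] := inv_row_sums_approx.
have f_approx t : 0 <= t -> t < delta ->
    `|norm_inf (Y t) - (r0 - t * margin D im)| <= K * t ^+ 2.
  move=> t_ge0 t_lt; apply: bigmax_approx t_ge0 D_min _ (rows t t_ge0 t_lt) => i.
  exact: sumr_ge0.
have f0 : norm_inf (Y 0) = r0.
  apply/eqP; rewrite -subr_eq0 -normr_le0.
  by have := f_approx 0 (lexx 0) delta_gt0; rewrite !mul0r subr0 expr0n mulr0.
apply: (right_deriv0_of_quadratic_error delta_gt0) => t t_gt0 t_lt /=.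
by rewrite f0 mulrN; apply: f_approx t_lt; apply: ltW.
Qed.

End InverseNormDerivative.

Section ScalarPlusAllOnes.
Variables (R : comPzRingType) (n : nat).
Local Notation J := (const_mx 1 : 'M[R]_n).

(* [1 1^T = J]: the matrix [S] of the theorem is [alpha I + l J]. *)
Lemma ones_mul_tr : ones R n *m (ones R n)^T = J.
Proof. by apply/matrixP => i j; rewrite !mxE big_ord1 !mxE mul1r. Qed.

Lemma allones_sq : J *m J = n%:R *: J.
Proof.
apply/matrixP => i j; rewrite !mxE (eq_bigr (fun _ => 1)) => [|k _]; last by rewrite !mxE mulr1.
by rewrite sumr_const card_ord mulr1.
Qed.

Lemma scalar_allones_mul a b c d :
  (a%:M + b *: J) *m (c%:M - d *: J) = (a * c)%:M + (b * c - a * d - n%:R * b * d) *: J.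
Proof.
rewrite mulmxDl !mulmxBr !mul_scalar_mx !mul_mx_scalar scale_scalar_mx.
rewrite -!scalemxAl -!scalemxAr allones_sq !scalerA.
by apply/matrixP => i j; rewrite !mxE; ring.
Qed.

Lemma margin_scalar_allones c d i :
  margin (c%:M - d *: J) i = c + (n%:R - 2) * d.
Proof.
have entry j : (c%:M - d *: J) i j = c *+ (i == j) - d by rewrite !mxE mulr1.
rewrite /margin (eq_bigr _ (fun j _ => entry j)) sumrB sumr_const card_ord entry eqxx.
rewrite (bigD1 i) //= eqxx big1 ?addr0 => [|j ji]; last by rewrite eq_sym (negbTE ji).
by rewrite /= !mulr1n -mulr_natr; ring.
Qed.

End ScalarPlusAllOnes.

Section AllOnesInverse.
Variables (R : realFieldType) (n : nat) (alpha l : R).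
Hypotheses (n_gt0 : (0 < n)%N) (alpha_gt0 : 0 < alpha) (l_gt0 : 0 < l).
Local Notation J := (const_mx 1 : 'M[R]_n).

Lemma scalar_allones_inv :
  (alpha%:M + l *: J) *m (alpha^-1%:M - (l / (alpha * (alpha + n%:R * l))) *: J) = 1%:M.
Proof.
have m_gt0 : 0 < alpha + n%:R * l by rewrite ltr_wpDr // mulr_ge0 // ltW.
rewrite scalar_allones_mul mulfV ?gt_eqF //.
have -> : l * alpha^-1 - alpha * (l / (alpha * (alpha + n%:R * l)))
    - n%:R * l * (l / (alpha * (alpha + n%:R * l))) = 0.
  by field; rewrite !gt_eqF.
by rewrite scale0r addr0.
Qed.

Lemma scalar_allones_inv_coef :
  0 < l / (alpha * (alpha + n%:R * l)) < alpha^-1.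
Proof.
have nl_ge : l <= n%:R * l by rewrite ler_peMl ?ler1n // ltW.
have m_gt0 : 0 < alpha + n%:R * l by rewrite ltr_wpDr // mulr_ge0 // ltW.
rewrite divr_gt0 ?mulr_gt0 //= ltr_pdivrMr ?mulr_gt0 // mulrA mulVf ?gt_eqF // mul1r.
exact: (ltr_pwDl alpha_gt0 nl_ge).
Qed.

End AllOnesInverse.

Definition rowsum (R : pzRingType) n (P : 'M[R]_n) (k : 'I_n) : R := \sum_j P k j.
Definition grand_sum (R : pzRingType) n (P : 'M[R]_n) : R := \sum_k rowsum P k.

Section Sandwich.
Variables (R : comPzRingType) (n : nat) (c d : R) (P : 'M[R]_n).
Hypothesis P_sym : P^T = P.
Local Notation B := (c%:M - d *: const_mx 1 : 'M[R]_n).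

Lemma sandwich_entry i j :
  (B *m P *m B) i j = c ^+ 2 * P i j - c * d * (rowsum P i + rowsum P j) + d ^+ 2 * grand_sum P.
Proof.
have BP_entry k l : (B *m P) k l = c * P k l - d * rowsum P l.
  rewrite mulmxBl mul_scalar_mx -scalemxAl !mxE; congr (_ - d * _).
  by apply: eq_bigr => m _; rewrite mxE mul1r -{1}P_sym mxE.
rewrite mulmxBr mul_mx_scalar -scalemxAr; set BP := B *m P in BP_entry *; clearbody BP.
rewrite !mxE BP_entry (eq_bigr (fun k => c * P i k - d * rowsum P k)) => [|k _].
  by rewrite sumrB -!mulr_sumr /grand_sum /rowsum; ring.
by rewrite BP_entry mxE mulr1.
Qed.

Lemma sandwich_margin i :
  margin (B *m P *m B) i = c ^+ 2 * (2 * P i i - rowsum P i)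
    - c * d * ((4 - n%:R) * rowsum P i - grand_sum P) + (2 - n%:R) * d ^+ 2 * grand_sum P.
Proof.
rewrite /margin (eq_bigr _ (fun j _ => sandwich_entry i j)) sandwich_entry.
rewrite big_split /= sumrB -!mulr_sumr big_split /= !sumr_const card_ord.
rewrite -/(rowsum P i) -/(grand_sum P) -[rowsum P i *+ n]mulr_natr -[grand_sum P *+ n]mulr_natr.
by ring.
Qed.

End Sandwich.

Section DiagDominant.
Variables (R : realDomainType) (n : nat) (P : 'M[R]_n).
Hypothesis P_ge0 : forall i j, 0 <= P i j.
Hypothesis P_sym : P^T = P.
Hypothesis P_dd : diag_dominant P.

Lemma rowsum_split i : rowsum P i = P i i + \sum_(j | j != i) P i j.
Proof. by rewrite /rowsum (bigD1 i). Qed.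

Lemma offdiag_le_diag i : \sum_(j | j != i) P i j <= P i i.
Proof.
have := P_dd i; rewrite /Delta subr_ge0 ger0_norm //.
by rewrite (eq_bigr _ (fun j _ => ger0_norm (P_ge0 i j))).
Qed.

Lemma entry_le_half_rowsum i k : k != i -> 2 * P i k <= rowsum P k.
Proof.
move=> ki; have Pki : P k i <= \sum_(j | j != k) P k j.
  by apply: (ler_sum_term (P := fun j => j != k)) => //; rewrite eq_sym.
have Pik : P i k = P k i by rewrite -{1}P_sym mxE.
by have := offdiag_le_diag k; rewrite rowsum_split Pik; lra.
Qed.

Lemma grand_sum_ge_rowsum i : rowsum P i + 2 * \sum_(j | j != i) P i j <= grand_sum P.
Proof.
rewrite [grand_sum P](bigD1 i) //= lerD2l mulr_sumr.
by apply: ler_sum => k ki; apply: entry_le_half_rowsum.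
Qed.

Lemma grand_sum_gt0 : P != 0 -> 0 < grand_sum P.
Proof.
have rowsum_ge0 k : 0 <= rowsum P k by apply: sumr_ge0.
move=> P_neq0; rewrite lt_def sumr_ge0 // andbT; apply: contraNneq P_neq0 => sum0.
apply/eqP/matrixP => i j; rewrite mxE; apply/le_anti; rewrite P_ge0 andbT -sum0.
apply: le_trans (ler_sum_term (P := predT) (fun k _ => rowsum_ge0 k) isT).
by apply: (ler_sum_term (P := predT)).
Qed.

End DiagDominant.

Lemma pos_comb3 (R : realDomainType) (a b k u v w : R) :
  0 < a -> 0 < b -> 0 < k -> 0 <= u -> 0 <= v -> 0 <= w -> 0 < u + v + w ->
  0 < a * u + b * v + k * w.
Proof.
move=> a_gt0 b_gt0 k_gt0 u_ge0 v_ge0 w_ge0 sum_gt0.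
pose mu := Num.min a (Num.min b k).
have mu_gt0 : 0 < mu by rewrite !lt_min a_gt0 b_gt0 k_gt0.
have : mu * u <= a * u by rewrite ler_wpM2r // ge_min lexx.
have : mu * v <= b * v by rewrite ler_wpM2r // !ge_min lexx orbT.
have : mu * w <= k * w by rewrite ler_wpM2r // !ge_min lexx !orbT.
have := mulr_gt0 mu_gt0 sum_gt0; rewrite !mulrDr; lra.
Qed.

(* Writing it as a combination of [s - x - 3o], [x - o] and [o] with positive
   coefficients makes this evident. *)
Lemma sandwich_margin_pos (R : realFieldType) (n : nat) (alpha l c d x o s : R) :
  (3 <= n)%N -> 0 < alpha -> 0 < l ->
  c = alpha^-1 -> d = l / (alpha * (alpha + n%:R * l)) ->
  0 <= o -> o <= x -> x + 3 * o <= s -> 0 < s ->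
  0 < c ^+ 2 * (2 * x - (x + o)) - c * d * ((4 - n%:R) * (x + o) - s)
      + (2 - n%:R) * d ^+ 2 * s.
Proof.
move=> n_ge3 alpha_gt0 l_gt0 -> -> o_ge0 o_le_x s_ge s_gt0.
set m := alpha + n%:R * l.
have n_ge3R : 3 <= n%:R :> R by rewrite (ler_nat R 3).
have m_gt0 : 0 < m by rewrite ltr_wpDr // mulr_ge0 // ltW.
pose cu := l * (alpha + 2 * l).
pose cv := m * (alpha + (2 * n%:R - 4) * l) + cu.
pose cw := l * ((2 * n%:R - 4) * alpha + 2 * l * (n%:R - 2) ^+ 2).
have -> : alpha^-1 ^+ 2 * (2 * x - (x + o)) - alpha^-1 * (l / (alpha * m)) * ((4 - n%:R) * (x + o) - s)
      + (2 - n%:R) * (l / (alpha * m)) ^+ 2 * s =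
    (cu * (s - x - 3 * o) + cv * (x - o) + cw * o) / (alpha ^+ 2 * m ^+ 2).
  by rewrite /cv /cu /cw /m; field; rewrite -/m !gt_eqF.
apply: divr_gt0; last by rewrite mulr_gt0 // exprn_gt0.
have n4_ge0 : 0 <= 2 * n%:R - 4 :> R by lra.
have cu_gt0 : 0 < cu by rewrite mulr_gt0 //; lra.
have n4l_ge0 : 0 <= (2 * n%:R - 4) * l := mulr_ge0 n4_ge0 (ltW l_gt0).
have cv_gt0 : 0 < cv.
  have : 0 <= m * (alpha + (2 * n%:R - 4) * l) by apply: (mulr_ge0 (ltW m_gt0)); lra.
  by rewrite /cv; lra.
have cw_gt0 : 0 < cw.
  apply: (mulr_gt0 l_gt0).
  have : 0 < (2 * n%:R - 4) * alpha by apply: (mulr_gt0 _ alpha_gt0); lra.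
  have : 0 <= 2 * l * (n%:R - 2) ^+ 2.
    by apply: (mulr_ge0 _ (sqr_ge0 _)); apply: (mulr_ge0 _ (ltW l_gt0)).
  lra.
by apply: pos_comb3 => //; lra.
Qed.

Unset Implicit Arguments.

Theorem proposition5p1 (R : realFieldType) (n : nat) (l alpha : R)
  (P : 'M[R]_n) :
  (3 <= n)%N -> 0 < l -> (n%:R - 2) * l <= alpha ->
  P != 0 -> P^T = P -> diag_dominant P -> (forall i j, 0 <= P i j) ->
  let S : 'M[R]_n := alpha%:M + l *: (ones R n *m (ones R n)^T) in
  let f : R -> R := fun t => norm_inf (invmx (S + t *: P)) in
  exists2 L : R, has_right_deriv0 f L & L < 0.
Proof.
move=> n_ge3 l_gt0 alpha_ge P_neq0 P_sym P_dd P_ge0 S f.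
have n_gt0 : (0 < n)%N by apply: leq_trans n_ge3.
have alpha_gt0 : 0 < alpha.
  by apply: lt_le_trans alpha_ge; rewrite pmulr_lgt0 // subr_gt0 (ltr_nat R 2).
pose c := alpha^-1; pose d := l / (alpha * (alpha + n%:R * l)).
pose B : 'M[R]_n := c%:M - d *: const_mx 1.
have SB : S *m B = 1%:M by rewrite /S ones_mul_tr scalar_allones_inv.
have /andP[d_gt0 d_lt_c] : 0 < d < c by apply: scalar_allones_inv_coef.
pose D := B *m P *m B.
have [im _ D_min] := @arg_minP _ _ _ (Ordinal n_gt0) predT (margin D) isT.
exists (- margin D im); last first.
  rewrite oppr_lt0 sandwich_margin // rowsum_split.
  have := grand_sum_ge_rowsum P_ge0 P_sym P_dd im; rewrite rowsum_split => s_ge.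
  apply: (sandwich_margin_pos n_ge3 alpha_gt0 l_gt0 (erefl c) (erefl d)).
  - exact: sumr_ge0.
  - exact: offdiag_le_diag.
  - lra.
  - exact: grand_sum_gt0.
(* [B] has diagonal [c - d] and off-diagonal entries [-d]. *)
have mu_gt0 : 0 < Num.min d (c - d) by rewrite lt_min d_gt0 subr_gt0.
apply: (inv_norm_right_deriv (r0 := c + (n%:R - 2) * d) SB mu_gt0).
- by move=> i; rewrite !mxE eqxx mulr1 ge_min lexx orbT.
- by move=> i j ji; rewrite !mxE eq_sym (negbTE ji) mulr1 sub0r lerN2 ge_min lexx.
- by move=> i; rewrite margin_scalar_allones.
- by move=> i; apply: D_min.
Qed.
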